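(* Let $q$ be a prime power, $n\geq 1$, and $c\in\mathbb{F}_q\setminus\{1\}$. Let $f_1,\ldots,f_n:\mathbb{F}_q\to\mathbb{F}_q$ be functions with $c$-differential uniformities $\delta_1,\ldots,\delta_n$ respectively. Let $\{\beta_1,\ldots,\beta_n\}$ be a basis of $\mathbb{F}_{q^n}$ over $\mathbb{F}_q$, let $A$ be the $n\times n$ matrix with $(i,j)$ entry $\beta_i^{q^{j-1}}$, write $A^{-1}=(a_{i,j})_{i,j}$, and for $1\leq k\leq n$ let $L_k(x)=\sum_{i=1}^n a_{i,k}x^{q^{i-1}}$. Then $F:\mathbb{F}_{q^n}\to\mathbb{F}_{q^n}$, $F(x)=\sum_{k=1}^n\beta_k f_k(L_k(x))$, has $c$-differential uniformity equal to $\prod_{i=1}^n\delta_i$.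
   Context: For a finite field $K$, a function $h:K\to K$ and $c\in K$, let ${}_c\Delta_h(a,b)=\#\{x\in K: h(x+a)-ch(x)=b\}$ and the $c$-differential uniformity is $\delta_{h,c}=\max\{{}_c\Delta_h(a,b): a,b\in K,\ a\neq 0\text{ if } c=1\}$. The matrix $A$ is nonsingular, and $L_k(\sum_i\beta_ix_i)=x_k$ for $x_i\in\mathbb{F}_q$. *)

From HB Require Import structures.
From mathcomp Require Import all_boot all_order all_algebra all_field.
Set Implicit Arguments. Unset Strict Implicit. Unset Printing Implicit Defensive.
Import Order.TTheory GRing.Theory.
Local Open Scope ring_scope.

Definition cDelta (T : finFieldType) (h : T -> T) (c a b : T) : nat :=
  #|[set x : T | h (x + a) - c * h x == b]|.

Definition cdu (T : finFieldType) (h : T -> T) (c : T) : nat :=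
  \max_(ab : T * T | (c != 1) || (ab.1 != 0)) cDelta h c ab.1 ab.2.

Definition is_basis (K L : finFieldType) (iota : {rmorphism K -> L}) (n : nat)
    (beta : 'I_n -> L) : Prop :=
  (forall v : 'I_n -> K, \sum_(i < n) iota (v i) * beta i = 0 -> forall i, v i = 0)
  /\ (forall x : L, exists v : 'I_n -> K, x = \sum_(i < n) iota (v i) * beta i).

(* A_{i,j} = beta_i ^ (q^j), 0-indexed, q = #|K| *)
Definition basisA (K L : finFieldType) (n : nat) (beta : 'I_n -> L) : 'M[L]_n :=
  \matrix_(i < n, j < n) beta i ^+ (#|K| ^ j)%N.

Definition Lmap (K L : finFieldType) (n : nat) (beta : 'I_n -> L) (k : 'I_n) (x : L) : L :=
  \sum_(i < n) (invmx (basisA K beta)) i k * x ^+ (#|K| ^ i)%N.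

(* preimage in K of an element of L under iota (default 0 if not in the image) *)
Definition pull (K L : finFieldType) (iota : {rmorphism K -> L}) (y : L) : K :=
  odflt 0 [pick z : K | iota z == y].

Definition Fmap (K L : finFieldType) (iota : {rmorphism K -> L}) (n : nat)
    (beta : 'I_n -> L) (f : 'I_n -> K -> K) (x : L) : L :=
  \sum_(k < n) beta k * iota (f k (pull iota (Lmap K beta k x))).

From HB Require Import structures.
From mathcomp Require Import all_boot all_order all_algebra all_field.
From mathcomp Require Import abelian.
Set Implicit Arguments. Unset Strict Implicit. Unset Printing Implicit Defensive.
Import Order.TTheory GRing.Theory.
Local Open Scope ring_scope.

(** In the coordinates [x = sum_i v_i beta_i], the map [L_k] reads off [v_k]:
    the row of [q^j]-th powers of [x] is the coordinate row times the Moore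
    matrix [A], which is invertible because a nonzero vector in its kernel would
    give a [q]-polynomial of degree at most [q^(n-1)] vanishing on all of
    [F_(q^n)].  Hence [F] acts coordinatewise as [(f_1, ..., f_n)], and so do
    [x |-> F (x + a) - c F x] and its fibres: the solution set of
    [F (x + a) - c F x = b] is the product of the solution sets of the
    coordinate equations.  Since [c <> 1] the maximum ranges over all pairs
    [(a, b)], so maximising the product of counts factorwise gives the product
    of the uniformities. *)

Lemma bigmax_surj (I J : finType) (h : J -> I) (F : I -> nat) :
  (forall i, exists j, i = h j) -> (\max_i F i = \max_j F (h j))%N.
Proof.
move=> h_surj; apply/eqP; rewrite eqn_leq; apply/andP; split.
  apply/bigmax_leqP => i _; have [j ->] := h_surj i.
  exact: (leq_bigmax (F := fun j => F (h j))).
by apply/bigmax_leqP => j _; apply: leq_bigmax.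
Qed.

Lemma bigmax_prod_ffun (I T : finType) (t0 : T) (G : I -> T -> nat) :
  (\max_(v : {ffun I -> T}) \prod_i G i (v i) = \prod_i \max_t G i t)%N.
Proof.
apply/eqP; rewrite eqn_leq; apply/andP; split.
  apply/bigmax_leqP => v _; apply: leq_prod => i _.
  exact: (leq_bigmax (F := G i)).
pose vmax := [ffun i => [arg max_(t > t0) G i t]].
pose prodG (v : {ffun I -> T}) := (\prod_i G i (v i))%N.
apply: leq_trans (leq_bigmax (F := prodG) vmax); apply/eq_leq/eq_bigr => i _.
by rewrite ffunE (bigop.bigmax_eq_arg t0).
Qed.

Lemma cdu_max (T : finFieldType) (h : T -> T) (c : T) :
  c != 1 -> cdu h c = (\max_(ab : T * T) cDelta h c ab.1 ab.2)%N.
Proof. by move=> c_neq1; apply: eq_bigl => ab; rewrite c_neq1. Qed.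

Section LinearizedPoly.

Variables (R : nzRingType) (q n : nat) (w : 'I_n -> R).

Definition linearized_poly : {poly R} := \sum_(j < n) w j *: 'X^(q ^ j)%N.

Lemma coef_linearized_poly (j : 'I_n) :
  (1 < q)%N -> linearized_poly`_(q ^ j)%N = w j.
Proof.
move=> q_gt1; rewrite coef_sumMXn (eq_bigl (pred1 j)) ?big_pred1_eq //.
by move=> i /=; rewrite eqn_exp2l.
Qed.

Lemma linearized_poly_eq0 : (1 < q)%N ->
  (linearized_poly == 0) = [forall j, w j == 0].
Proof.
move=> q_gt1; apply/eqP/forallP => [P0 j | w0].
  by rewrite -(coef_linearized_poly j q_gt1) P0 coef0.
by apply: big1 => j _; rewrite (eqP (w0 j)) scale0r.
Qed.

Lemma size_linearized_poly :
  (0 < q)%N -> (size linearized_poly <= (q ^ n.-1).+1)%N.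
Proof.
move=> q_gt0; apply: leq_trans (size_sum _ _ _) _; apply/bigmax_leqP => j _.
apply: leq_trans (size_scale_leq _ _) _.
by rewrite size_polyXn ltnS leq_pexp2l // -ltnS (ltn_predK (ltn_ord j)).
Qed.

Lemma horner_linearized_poly x :
  linearized_poly.[x] = \sum_(j < n) w j * x ^+ (q ^ j)%N.
Proof.
by rewrite horner_sum; apply: eq_bigr => j _; rewrite hornerZ hornerXn.
Qed.

End LinearizedPoly.

Lemma expr_card_pow (K : finFieldType) j (a : K) : a ^+ (#|K| ^ j)%N = a.
Proof.
elim: j => [|j IH]; first by rewrite expn0 expr1.
by rewrite expnSr exprM IH expf_card.
Qed.

Section CardPowerFrobenius.

Variables (K : finFieldType) (R : comNzRingType) (iota : {rmorphism K -> R}).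
Local Notation q := #|K|.

Lemma pchar_nat_card_pow j : [pchar R].-nat (q ^ j)%N.
Proof.
have [p p_prime pK] := finPcharP K.
have pR : p \in [pchar R] := rmorph_pchar iota pK.
have p_nat_q : p.-nat q.
  by rewrite -cardsT; exact: abelem_pgroup (fin_ring_pchar_abelem pK).
apply: (@sub_in_pnat p) => [r _ /eqnP -> //|].
by rewrite pnatX p_nat_q.
Qed.

Lemma exprD_card_pow j (x y : R) :
  (x + y) ^+ (q ^ j)%N = x ^+ (q ^ j)%N + y ^+ (q ^ j)%N.
Proof. exact: exprDn_pchar (pchar_nat_card_pow j). Qed.

Lemma expr_card_pow_sum j (I : Type) (r : seq I) (F : I -> R) :
  (\sum_(i <- r) F i) ^+ (q ^ j)%N = \sum_(i <- r) F i ^+ (q ^ j)%N.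
Proof.
apply: (big_morph (fun x : R => x ^+ (q ^ j)%N)); first exact: exprD_card_pow.
by rewrite expr0n expn_eq0 gtn_eqF ?(ltnW (finNzRing_gt1 K)).
Qed.

Lemma rmorph_expr_card_pow j (a : K) : iota a ^+ (q ^ j)%N = iota a.
Proof. by rewrite -rmorphXn expr_card_pow. Qed.

End CardPowerFrobenius.

Section BasisCoordinates.

Variables (K L : finFieldType) (iota : {rmorphism K -> L}) (n : nat).
Variable beta : 'I_n -> L.
Hypothesis beta_basis : is_basis iota beta.
Local Notation q := #|K|.

Definition lincomb (v : {ffun 'I_n -> K}) : L := \sum_(i < n) iota (v i) * beta i.

Lemma lincomb_surj x : exists v, x = lincomb v.
Proof.
have [v ->] := beta_basis.2 x; exists [ffun i => v i].
by apply: eq_bigr => i _; rewrite ffunE.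
Qed.

Lemma lincomb_inj : injective lincomb.
Proof.
move=> v w vw; apply/ffunP => i; apply/eqP; rewrite -subr_eq0; apply/eqP.
apply: (beta_basis.1 (fun i => v i - w i)).
under eq_bigr => j _ do rewrite rmorphB mulrBl.
by rewrite sumrB -/(lincomb v) -/(lincomb w) vw subrr.
Qed.

Lemma lincombD v w : lincomb v + lincomb w = lincomb [ffun k => v k + w k].
Proof.
rewrite -big_split; apply: eq_bigr => k _.
by rewrite ffunE rmorphD mulrDl.
Qed.

Lemma lincombBZ c v w :
  lincomb v - iota c * lincomb w = lincomb [ffun k => v k - c * w k].
Proof.
rewrite mulr_sumr -sumrB; apply: eq_bigr => k _.
by rewrite ffunE rmorphB rmorphM mulrBl mulrA.
Qed.

Lemma row_expr_lincomb v :
  \row_j lincomb v ^+ (q ^ j)%N = \row_i iota (v i) *m basisA K beta.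
Proof.
apply/rowP => j; rewrite !mxE (expr_card_pow_sum iota); apply: eq_bigr => i _.
by rewrite !mxE exprMn rmorph_expr_card_pow.
Qed.

Hypotheses (n_gt0 : (0 < n)%N) (card_L : #|L| = (q ^ n)%N).

Lemma basisA_unitmx : basisA K beta \in unitmx.
Proof.
have q_gt1 : (1 < q)%N := finNzRing_gt1 K.
rewrite unitmxE unitfE -det_tr; apply/negP => /det0P [w w_neq0 wA0].
have Aw0 : basisA K beta *m w^T = 0.
  by rewrite -[LHS]trmxK trmx_mul trmxK wA0 trmx0.
pose P := linearized_poly q (w 0).
have P_neq0 : P != 0.
  rewrite linearized_poly_eq0 //; apply: contra w_neq0 => /forallP w0.
  by apply/eqP/rowP => j; rewrite !mxE; apply/eqP.
have P_root x : root P x.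
  have [v ->] := lincomb_surj x.
  rewrite rootE horner_linearized_poly.
  have -> : \sum_(j < n) w 0 j * lincomb v ^+ (q ^ j)%N
          = ((\row_j lincomb v ^+ (q ^ j)%N) *m w^T) 0 0.
    by rewrite mxE; apply: eq_bigr => j _; rewrite !mxE mulrC.
  by rewrite row_expr_lincomb -mulmxA Aw0 mulmx0 mxE.
have := max_poly_roots P_neq0 (introT allP (fun x _ => P_root x)) (enum_uniq L).
rewrite -cardE card_L => /leq_trans/(_ (size_linearized_poly _ (ltnW q_gt1))).
by rewrite ltnS leqNgt ltn_exp2l // prednK // leqnn.
Qed.

Lemma Lmap_lincomb v k : Lmap K beta k (lincomb v) = iota (v k).
Proof.
set A := basisA K beta.
transitivity ((\row_j lincomb v ^+ (q ^ j)%N *m invmx A) 0 k).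
  by rewrite mxE; apply: eq_bigr => i _; rewrite !mxE mulrC.
by rewrite row_expr_lincomb mulmxK ?basisA_unitmx // mxE.
Qed.

Lemma pull_rmorph (a : K) : pull iota (iota a) = a.
Proof.
rewrite /pull; case: pickP => [z /eqP /fmorph_inj //|no_preim].
by have := no_preim a; rewrite eqxx.
Qed.

Lemma Fmap_lincomb (f : 'I_n -> K -> K) v :
  Fmap iota beta f (lincomb v) = lincomb [ffun k => f k (v k)].
Proof.
apply: eq_bigr => k _.
by rewrite Lmap_lincomb pull_rmorph ffunE mulrC.
Qed.

Lemma cDelta_Fmap_lincomb (f : 'I_n -> K -> K) c va vb :
  cDelta (Fmap iota beta f) (iota c) (lincomb va) (lincomb vb)
  = (\prod_(k < n) cDelta (f k) c (va k) (vb k))%N.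
Proof.
pose S k := [pred y | f k (y + va k) - c * f k y == vb k].
transitivity #|lincomb @: family S|.
  apply: eq_card => x; rewrite inE.
  have [v ->] := lincomb_surj x.
  rewrite mem_imset; last exact: lincomb_inj.
  rewrite lincombD !Fmap_lincomb lincombBZ (inj_eq lincomb_inj).
  apply/eqP/familyP => [/ffunP coord_eq k | coord_eq].
    by have := coord_eq k; rewrite !ffunE inE => ->.
  apply/ffunP => k; rewrite !ffunE; apply/eqP.
  by have := coord_eq k; rewrite inE.
rewrite card_imset; last exact: lincomb_inj.
rewrite card_family foldrE big_map big_enum /=.
by apply: eq_bigr => k _; apply: eq_card => y; rewrite inE.
Qed.

End BasisCoordinates.

Theorem theorem3p1 (K L : finFieldType) (iota : {rmorphism K -> L}) (n : nat)
  (hn : (1 <= n)%N) (hL : #|L| = (#|K| ^ n)%N)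
  (c : K) (hc : c != 1) (f : 'I_n -> K -> K)
  (beta : 'I_n -> L) (hbeta : is_basis iota beta) :
  cdu (Fmap iota beta f) (iota c) = (\prod_(i < n) cdu (f i) c)%N.
Proof.
have iota_c_neq1 : iota c != 1 by rewrite fmorph_eq1.
pose lincomb2 (v : {ffun 'I_n -> K * K}) :=
  (lincomb iota beta [ffun k => (v k).1], lincomb iota beta [ffun k => (v k).2]).
have lincomb2_surj ab : exists v, ab = lincomb2 v.
  case: ab => a b; have [va ->] := lincomb_surj hbeta a.
  have [vb ->] := lincomb_surj hbeta b.
  by exists [ffun k => (va k, vb k)]; congr (_, _); congr lincomb;
    apply/ffunP => k; rewrite !ffunE.
rewrite cdu_max // (bigmax_surj _ lincomb2_surj).
under eq_bigr => v _ do rewrite /= (cDelta_Fmap_lincomb hbeta hn hL).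
under eq_bigr => v _ do under eq_bigr => k _ do rewrite !ffunE.
rewrite (bigmax_prod_ffun (0, 0) (fun k ab => cDelta (f k) c ab.1 ab.2)).
by apply: eq_bigr => k _; rewrite cdu_max.
Qed.
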